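(* Let $T$ be a session type with $\Delta\vdash T:\mathsf{s}^m$ satisfying the standing assumptions below. If $\llbracket T\rrbracket\xrightarrow{\alpha}p$ in the BPA labelled transition system over $\mathcal{E}_T$, then $p=\llbracket T'\rrbracket$ for some session type $T'$ with $T\xrightarrow{\alpha}T'$ in the session-type labelled transition system.
   Context: Session types: $T ::= \mathsf{Skip} \mid {!}B \mid {?}B \mid \oplus\{\ell:T_\ell\}_{\ell\in L} \mid \&\{\ell:T_\ell\}_{\ell\in L} \mid T;T \mid \mu a{:}\kappa.T \mid a$, with kinding: $\mathsf{Skip}:\mathsf{s}^{\mathsf{un}}$; ${!}B,{?}B:\mathsf{s}^{\mathsf{lin}}$ for message types $B$; choices $:\mathsf{s}^{\mathsf{lin}}$ when all branches are; $T;U:\mathsf{s}^{\mathsf{lin}}$ when both are; $\mu a{:}\kappa.T:\kappa$ when $T$ contractive on $a$ and $\Delta,a{:}\kappa\vdash T:\kappa$; variables by lookup in $\Delta$; subsumption. Terminated: $\mathsf{Skip}$; $T;U$ iff both terminated; $\mu a.T$ iff $T$ terminated. Contractive on $a$: $T\neq a$, for $T=U;V$, $U$ contractive on $a$ and if $U$ terminated then $V$ contractive on $a$; for $T=\mu b.T'$, $T'$ contractive on $a$. Standing assumptions: every $\mu$-bound variable occurs free in its body; bound variables are distinct. Session-type LTS: ${!}B\xrightarrow{!B}\mathsf{Skip}$, ${?}B\xrightarrow{?B}\mathsf{Skip}$, $\star\{\ell:T_\ell\}_{\ell\in L}\xrightarrow{\star k}T_k$ ($k\in L$), $b\xrightarrow{b}\mathsf{Skip}$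 for a free variable $b$; $\mu a.T\xrightarrow{\alpha}T'$ if $T[\mu a.T/a]\xrightarrow{\alpha}T'$; $T;U\xrightarrow{\alpha}T';U$ if $T\xrightarrow{\alpha}T'$; $T;U\xrightarrow{\alpha}U'$ if $T$ is terminated and $U\xrightarrow{\alpha}U'$. BPA processes $p ::= \alpha \mid X \mid p+p \mid p\cdot p \mid \varepsilon$ with LTS over equations $\mathcal E$: $\alpha\xrightarrow{\alpha}\varepsilon$; $p+q\xrightarrow{\alpha}p'$ if $p\xrightarrow{\alpha}p'$ (and symmetrically for $q$); $p\cdot q\xrightarrow{\alpha}p'\cdot q$ if $p\xrightarrow{\alpha}p'\neq\varepsilon$; $p\cdot q\xrightarrow{\alpha}q$ if $p\xrightarrow{\alpha}\varepsilon$; $X\xrightarrow{\alpha}p'$ if $X\triangleq p\in\mathcal E$ and $p\xrightarrow{\alpha}p'$. Operator $\odot$: $p\odot\varepsilon=p$, $\varepsilon\odot q=q$, else $p\cdot q$. Translation (each $\mu$-subterm $\mu a_i.T_i$ of $T$ gets a distinct variable $X_i$): $\llbracket\mathsf{Skip}\rrbracket=\varepsilon$, $\llbracket\sharp B\rrbracket=\sharp B$, $\llbracket\star\{\ell:T_\ell\}\rrbracket=\sum_\ell\star\ell\odot\llbracket T_\ell\rrbracket$, $\llbracket T;U\rrbracket=\llbracket T\rrbracket\odot\llbracket U\rrbracket$, $\llbracket b\rrbracket=b$ for free $b$, $\llbracket a_i\rrbracket=\llbracket\mu a_i.T_i\rrbracket=X_i$. Unravel: $\mathrm{unr}_\sigma(T;U)=\mathrm{unr}_\sigma(U)$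 if $\mathrm{unr}_\sigma(T)=\mathsf{Skip}$, else $\mathrm{unr}_\sigma(T);U$; $\mathrm{unr}_\sigma(\mu a.T)=\mathrm{unr}_{\sigma\circ[\mu a.T/a]}(T)$; $\mathrm{unr}_\sigma(T)=T$ otherwise. Equations: $\mathcal{E}_T=\{X_i\triangleq\llbracket\mathrm{unr}_{\mathrm{id}}(T_i)\rrbracket\}_i$. *)

From Stdlib Require Import List Arith.
Import ListNotations.
Set Implicit Arguments.

(* type variables (also used as BPA process variables X_a, named after the
   mu-bound type variable a they come from) *)
Definition tvar := nat.

Inductive mult := Un | Lin.
Inductive kind := KSession (m : mult).
Inductive pol := PInt | PExt.
Inductive dir := DOut | DIn.

Section Defs.
(* B : message types, L : labels *)
Variables (B L : Type).

Inductive stype : Type :=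
| TSkip
| TMsg (d : dir) (b : B)
| TChoice (p : pol) (br : list (L * stype))
| TSeq (T U : stype)
| TMu (a : tvar) (k : kind) (T : stype)
| TVar (a : tvar).

(* T[U/a] (no capture can occur under the standing assumptions) *)
Fixpoint subst (a : tvar) (U : stype) (T : stype) : stype :=
  match T with
  | TSkip => TSkip
  | TMsg d b => TMsg d b
  | TChoice p br => TChoice p (map (fun '(l, t) => (l, subst a U t)) br)
  | TSeq T1 T2 => TSeq (subst a U T1) (subst a U T2)
  | TMu b k T1 => if Nat.eqb a b then TMu b k T1 else TMu b k (subst a U T1)
  | TVar b => if Nat.eqb a b then U else TVar b
  end.

Fixpoint fv (T : stype) : list tvar :=
  match T with
  | TSkip => []
  | TMsg _ _ => []
  | TChoice _ br => flat_map (fun '(_, t) => fv t) br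
  | TSeq T1 T2 => fv T1 ++ fv T2
  | TMu a _ T1 => filter (fun b => negb (Nat.eqb a b)) (fv T1)
  | TVar a => [a]
  end.

Fixpoint musub (T : stype) : list (tvar * stype) :=
  match T with
  | TChoice _ br => flat_map (fun '(_, t) => musub t) br
  | TSeq T1 T2 => musub T1 ++ musub T2
  | TMu a _ T1 => (a, T1) :: musub T1
  | _ => []
  end.

Definition bv (T : stype) : list tvar := map fst (musub T).

Definition standing (T : stype) : Prop :=
  NoDup (bv T) /\
  (forall a, In a (bv T) -> ~ In a (fv T)) /\
  (forall a T1, In (a, T1) (musub T) -> In a (fv T1)).

Fixpoint terminated (T : stype) : Prop :=
  match T with
  | TSkip => True
  | TSeq T1 T2 => terminated T1 /\ terminated T2
  | TMu _ _ T1 => terminated T1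
  | _ => False
  end.

Fixpoint contractive (a : tvar) (T : stype) : Prop :=
  match T with
  | TVar b => b <> a
  | TSeq U V => contractive a U /\ (terminated U -> contractive a V)
  | TMu _ _ T1 => contractive a T1
  | _ => True
  end.

Inductive subkind : kind -> kind -> Prop :=
| subk_refl k : subkind k k
| subk_un : subkind (KSession Un) (KSession Lin).

Fixpoint lookup (D : list (tvar * kind)) (a : tvar) : option kind :=
  match D with
  | [] => None
  | (b, k) :: D' => if Nat.eqb a b then Some k else lookup D' a
  end.

(* Delta |- T : kappa ; a choice {l : T_l}_{l in L} is a finite map from a
   nonempty label set, i.e. a nonempty list with distinct labels *)
Inductive has_kind : list (tvar * kind) -> stype -> kind -> Prop :=
| K_Skip D : has_kind D TSkip (KSession Un)
| K_Msg D d b : has_kind D (TMsg d b) (KSession Lin)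
| K_Choice D p br :
    br <> [] -> NoDup (map fst br) ->
    (forall l t, In (l, t) br -> has_kind D t (KSession Lin)) ->
    has_kind D (TChoice p br) (KSession Lin)
| K_Seq D T U :
    has_kind D T (KSession Lin) -> has_kind D U (KSession Lin) ->
    has_kind D (TSeq T U) (KSession Lin)
| K_Mu D a k T :
    contractive a T -> has_kind ((a, k) :: D) T k -> has_kind D (TMu a k T) k
| K_Var D a k : lookup D a = Some k -> has_kind D (TVar a) k
| K_Sub D T k k' : has_kind D T k -> subkind k k' -> has_kind D T k'.

Inductive action : Type :=
| AMsg (d : dir) (b : B)
| AChoice (p : pol) (l : L)
| AVar (a : tvar).

Inductive tstep : stype -> action -> stype -> Prop :=
| S_Msg d b : tstep (TMsg d b) (AMsg d b) TSkip
| S_Choice p br l t : In (l, t) br -> tstep (TChoice p br) (AChoice p l) t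
| S_Var b : tstep (TVar b) (AVar b) TSkip
| S_Mu a k T al T' :
    tstep (subst a (TMu a k T) T) al T' -> tstep (TMu a k T) al T'
| S_Seq1 T U al T' : tstep T al T' -> tstep (TSeq T U) al (TSeq T' U)
| S_Seq2 T U al U' : terminated T -> tstep U al U' -> tstep (TSeq T U) al U'.

Inductive proc : Type :=
| PAct (al : action)
| PVar (X : tvar)
| PSum (p q : proc)
| PSeq (p q : proc)
| PEps.

Definition odot (p q : proc) : proc :=
  match p, q with
  | _, PEps => p
  | PEps, _ => q
  | _, _ => PSeq p q
  end.

(* BPA LTS over a set of equations E (X =def p iff In (X, p) E) *)
Inductive pstep (E : list (tvar * proc)) : proc -> action -> proc -> Prop :=
| P_Act al : pstep E (PAct al) al PEps
| P_SumL p q al p' : pstep E p al p' -> pstep E (PSum p q) al p'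
| P_SumR p q al q' : pstep E q al q' -> pstep E (PSum p q) al q'
| P_Seq1 p q al p' : pstep E p al p' -> p' <> PEps -> pstep E (PSeq p q) al (PSeq p' q)
| P_Seq2 p q al : pstep E p al PEps -> pstep E (PSeq p q) al q
| P_Var X p al p' : In (X, p) E -> pstep E p al p' -> pstep E (PVar X) al p'.

Fixpoint psum (ps : list proc) : proc :=
  match ps with
  | [] => PEps (* never used: choices are nonempty *)
  | [p] => p
  | p :: ps' => PSum p (psum ps')
  end.

(* translation [[.]], relative to the list bvs of bound variables of the
   original type: the mu-subterm mu a_i.T_i gets process variable X_{a_i} *)
Fixpoint tr (bvs : list tvar) (T : stype) : proc :=
  match T with
  | TSkip => PEps
  | TMsg d b => PAct (AMsg d b)
  | TChoice p br =>
      psum (map (fun '(l, t) => odot (PAct (AChoice p l)) (tr bvs t)) br)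
  | TSeq T1 T2 => odot (tr bvs T1) (tr bvs T2)
  | TMu a _ _ => PVar a
  | TVar a => if existsb (Nat.eqb a) bvs then PVar a else PAct (AVar a)
  end.

(* unravel; sigma is a (pending) substitution, represented as a list of
   single substitutions, composition sigma o [U/a] being (a,U) :: sigma *)
Fixpoint unr (sigma : list (tvar * stype)) (T : stype) : stype :=
  match T with
  | TSeq T1 U =>
      match unr sigma T1 with
      | TSkip => unr sigma U
      | T1' => TSeq T1' U
      end
  | TMu a k T1 => unr ((a, TMu a k T1) :: sigma) T1
  | _ => T
  end.

Definition eqns (T : stype) : list (tvar * proc) :=
  map (fun '(a, Ti) => (a, tr (bv T) (unr [] Ti))) (musub T).

End Defs.

From Stdlib Require Import List Arith.
Import ListNotations.
Set Implicit Arguments.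

(* A BPA state reached from [[T]] is in general the translation [[S]] of a
   type S in which recursion variables have escaped their binders (after an
   unfolding X_a --> [[unr(T_a)]]).  The session type actually reached is an
   instance S' of S: every such escaped variable a is closed by its recursive
   type mu a.Y', where Y' is itself an instance of the body recorded for a.  The theorem
   follows because a well-kinded T satisfying the standing assumptions is an
   instance of itself: its choices are nonempty (so only terminated types
   translate to the empty process) and its free variables are not bound. *)

Arguments TSkip {B L}. Arguments TMsg {B L}. Arguments TVar {B L}.
Arguments TSeq {B L}. Arguments TMu {B L}. Arguments AChoice {B L}.
Arguments PEps {B L}. Arguments PAct {B L}. Arguments PVar {B L}.
Arguments PSum {B L}. Arguments PSeq {B L}.

Lemma existsb_eqb_In (a : tvar) l : existsb (Nat.eqb a) l = true <-> In a l.
Proof.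
  rewrite existsb_exists. split.
  - intros [x [Hx Hax]]. apply Nat.eqb_eq in Hax. subst; auto.
  - intros H. exists a. split; auto. apply Nat.eqb_refl.
Qed.

Lemma in_remove_iff (x a : tvar) G :
  In x (remove Nat.eq_dec a G) <-> In x G /\ x <> a.
Proof.
  split; [apply in_remove | intros [Hx Hne]; now apply in_in_remove].
Qed.

Lemma NoDup_fst_functional (A C : Type) (l : list (A * C)) a y1 y2 :
  NoDup (map fst l) -> In (a, y1) l -> In (a, y2) l -> y1 = y2.
Proof.
  induction l as [|[b y] l IH]; cbn; intros Hnd H1 H2; [tauto|].
  inversion Hnd as [|? ? Hb Hnd']; subst.
  destruct H1 as [H1 | H1], H2 as [H2 | H2].
  - congruence.
  - injection H1 as <- <-. apply (in_map fst) in H2. contradiction.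
  - injection H2 as <- <-. apply (in_map fst) in H1. contradiction.
  - eauto.
Qed.

Section BPA.
Variables B L : Type.
Variable E : list (tvar * proc B L).

Lemma eps_or_not (r : proc B L) : r = PEps \/ r <> PEps.
Proof. destruct r; auto; right; discriminate. Qed.

Lemma odot_eps_l (q : proc B L) : odot PEps q = q.
Proof. destruct q; reflexivity. Qed.

Lemma odot_eps_r (p : proc B L) : odot p PEps = p.
Proof. destruct p; reflexivity. Qed.

Lemma odot_eq_eps (p q : proc B L) : odot p q = PEps -> p = PEps /\ q = PEps.
Proof. destruct p, q; cbn; intros H; try discriminate; auto. Qed.

Lemma odot_proper (p q : proc B L) :
  p <> PEps -> q <> PEps -> odot p q = PSeq p q.
Proof. destruct p, q; cbn; congruence. Qed.

Lemma psum_eq_eps (ps : list (proc B L)) : psum ps = PEps -> ps = [] \/ In PEps ps.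
Proof.
  induction ps as [|p [|q ps] IH]; cbn; intros H; auto; discriminate.
Qed.

Lemma act_step (a al : action B L) p : pstep E (PAct a) al p -> al = a /\ p = PEps.
Proof. intros H; inversion H; auto. Qed.

Lemma psum_step (ps : list (proc B L)) al p :
  pstep E (psum ps) al p -> exists q, In q ps /\ pstep E q al p.
Proof.
  induction ps as [|q [|q' ps] IH]; cbn; intros H.
  - inversion H.
  - eauto.
  - inversion H as [| ? ? ? ? Hq | ? ? ? ? Hrest | | |]; subst.
    + eauto.
    + destruct (IH Hrest) as [r [Hr Hs]]. exists r; cbn in *; tauto.
Qed.

Lemma odot_act_step (a al : action B L) r p :
  pstep E (odot (PAct a) r) al p -> al = a /\ p = r.
Proof.
  destruct r; cbn; intros H;
    try (apply act_step in H; tauto);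
    inversion H as [| | | ? ? ? ? Ha Hne | ? ? ? Ha |]; subst;
    apply act_step in Ha; destruct Ha; subst; tauto.
Qed.
End BPA.

Section SessionTypes.
Variables B L : Type.

Lemma term_subst a (N X : stype B L) : terminated (subst a N X) -> terminated X \/ terminated N.
Proof.
  induction X; cbn; intros H; auto.
  - destruct H as [H1 H2]. destruct (IHX1 H1), (IHX2 H2); tauto.
  - destruct (Nat.eqb a a0); cbn in H; auto.
  - destruct (Nat.eqb a a0); cbn in H; auto.
Qed.

Lemma unr_env_irrelevant (X : stype B L) : forall s1 s2, unr s1 X = unr s2 X.
Proof.
  induction X; intros s1 s2; cbn; auto.
  now rewrite (IHX1 s1 s2), (IHX2 s1 s2).
Qed.

Lemma unr_skip_terminated (X : stype B L) : forall s, unr s X = TSkip -> terminated X.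
Proof.
  induction X; intros s H; cbn in *; try discriminate; eauto.
  destruct (unr s X1) eqn:E1; try discriminate. eauto.
Qed.
End SessionTypes.

(* M records the mu-subterms (a, Y) of the original type; bvs are its bound
   variables and trm the translation relative to them. *)
Section Instances.
Variables B L : Type.
Variable M : list (tvar * stype B L).
Notation bvs := (map fst M).
Notation stp := (stype B L).
Notation trm := (tr (B:=B) (L:=L) bvs).

(* Inst G S S': S' is obtained from S by closing every recursion variable a
   of M that occurs free in S and is not in the scope G of its binder, by a
   recursive type mu a.Y' whose body Y' instantiates the body recorded for a
   in M. *)
Inductive Inst : list tvar -> stp -> stp -> Prop :=
| I_skip G : Inst G TSkip TSkip
| I_msg G d b : Inst G (TMsg d b) (TMsg d b)
| I_choice G p br br' :
    br <> [] -> InstL G br br' -> Inst G (TChoice p br) (TChoice p br')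
| I_seq G S1 S2 S1' S2' :
    Inst G S1 S1' -> Inst G S2 S2' -> Inst G (TSeq S1 S2) (TSeq S1' S2')
| I_mu G a k Y Y' :
    In (a, Y) M -> Inst (a :: G) Y Y' -> Inst G (TMu a k Y) (TMu a k Y')
| I_rec G a k Y Y' :
    In (a, Y) M -> ~ In a G -> Inst [a] Y Y' -> Inst G (TVar a) (TMu a k Y')
| I_var G a : In a G \/ ~ In a bvs -> Inst G (TVar a) (TVar a)
with InstL : list tvar -> list (L * stp) -> list (L * stp) -> Prop :=
| IL_nil G : InstL G [] []
| IL_cons G l t t' br br' :
    Inst G t t' -> InstL G br br' -> InstL G ((l, t) :: br) ((l, t') :: br').

Scheme Inst_mut := Induction for Inst Sort Prop
with InstL_mut := Induction for InstL Sort Prop.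

(* Instances have the same translation: a closed variable and its recursive
   type both translate to X_a. *)
Lemma tr_inst G S S' : Inst G S S' -> trm S = trm S'.
Proof.
  revert G S S'.
  apply (Inst_mut (fun G S S' _ => trm S = trm S')
    (fun G br br' _ => forall pl,
       map (fun '(l, t) => odot (PAct (AChoice pl l)) (trm t)) br =
       map (fun '(l, t) => odot (PAct (AChoice pl l)) (trm t)) br'));
    intros; cbn [tr map]; try reflexivity.
  - now rewrite H.
  - now rewrite H, H0.
  -
    match goal with HM : In (?a, _) M |- _ =>
      apply (in_map fst), existsb_eqb_In in HM; cbn in HM; now rewrite HM end.
  - now rewrite H, H0.
Qed.

Lemma inst_ctx_equiv G S S' : Inst G S S' ->
  forall G', (forall x, In x G <-> In x G') -> Inst G' S S'.
Proof.
  revert G S S'.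
  apply (Inst_mut (fun G S S' _ => forall G', (forall x, In x G <-> In x G') -> Inst G' S S')
    (fun G br br' _ => forall G', (forall x, In x G <-> In x G') -> InstL G' br br'));
    intros; try (constructor; eauto; fail).
  - apply I_mu; auto. apply H. intros x; cbn. rewrite H0. tauto.
  - eapply I_rec; eauto. rewrite <- H0. auto.
  - apply I_var. rewrite <- H. auto.
Qed.

Lemma inst_rec_weaken a N G : Inst [] (TVar a) N -> ~ In a G -> Inst G (TVar a) N.
Proof.
  intros H HG. inversion H; subst.
  - eapply I_rec; eauto.
  - apply I_var. destruct H2 as [[]|H2]; auto.
Qed.

(* Substitution lemma: replacing a by a closing instance N removes a from
   the scope.  This is what keeps unfoldings mu a.Y' --> Y'[mu a.Y'/a] within
   the instance relation. *)
Lemma inst_subst G Y Y' : Inst G Y Y' -> forall a N, Inst [] (TVar a) N ->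
  Inst (remove Nat.eq_dec a G) Y (subst a N Y').
Proof.
  revert G Y Y'.
  apply (Inst_mut (fun G Y Y' _ => forall a N, Inst [] (TVar a) N ->
           Inst (remove Nat.eq_dec a G) Y (subst a N Y'))
    (fun G br br' _ => forall a N, Inst [] (TVar a) N ->
           InstL (remove Nat.eq_dec a G) br (map (fun '(l, t) => (l, subst a N t)) br')));
    intros; cbn; try (constructor; eauto; fail).
  - destruct (Nat.eqb_spec a0 a) as [<-|Hne].
    + apply I_mu; auto. eapply inst_ctx_equiv; [eassumption|].
      intros x; cbn. rewrite in_remove_iff. destruct (Nat.eq_dec x a0); intuition.
    + apply I_mu; auto. specialize (H a0 N H0). cbn in H.
      destruct (Nat.eq_dec a0 a); [congruence | exact H].
  - destruct (Nat.eqb_spec a0 a) as [<-|Hne].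
    + eapply I_rec; eauto. apply remove_In.
    + eapply I_rec; eauto.
      * rewrite in_remove_iff. tauto.
      * specialize (H a0 N H0). cbn in H. destruct (Nat.eq_dec a0 a); [congruence | exact H].
  - destruct (Nat.eqb_spec a0 a) as [<-|Hne].
    + apply inst_rec_weaken; auto. apply remove_In.
    + apply I_var. rewrite in_remove_iff. intuition congruence.
Qed.

Lemma inst_terminated G Y Z : Inst G Y Z -> terminated Y -> terminated Z.
Proof. induction 1; cbn; tauto. Qed.

(* A type translating to the empty process has only terminated instances;
   this uses the nonemptiness of choices. *)
Lemma inst_eps_terminated G S S' : Inst G S S' -> trm S = PEps -> terminated S'.
Proof.
  induction 1; cbn [tr terminated]; intros Heps; try discriminate; auto.
  - apply psum_eq_eps in Heps as [Hnil | Hin].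
    + destruct br; cbn in Hnil; congruence.
    + apply in_map_iff in Hin as [[l t] [Ht _]].
      apply odot_eq_eps in Ht as [Ht _]; discriminate.
  - apply odot_eq_eps in Heps as [H1 H2]; auto.
  - destruct (existsb (Nat.eqb a) bvs); discriminate.
  - destruct (existsb (Nat.eqb a) bvs); discriminate.
Qed.

Lemma unr_inst (Y : stp) : forall Z, Inst [] Y Z ->
  exists Z0, Inst [] (unr [] Y) Z0 /\
    (forall al S, tstep Z0 al S -> tstep Z al S) /\ (terminated Z0 -> terminated Z).
Proof.
  induction Y; intros Z HI; cbn; try (exists Z; auto; fail).
  - inversion HI as [| | | ? ? ? S1' S2' HI1 HI2 | | |]; subst.
    destruct (IHY1 _ HI1) as [Z1 [HZ1 [Hsim1 Hterm1]]].
    destruct (unr [] Y1) eqn:E1;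
      try (exists (TSeq Z1 S2'); split; [now constructor|split];
           [ intros al S Hs; inversion Hs; subst; [apply S_Seq1 | apply S_Seq2]; auto
           | cbn; tauto ]; fail).
    assert (Hterm : terminated S1').
    { eapply inst_terminated; [exact HI1 | eapply unr_skip_terminated; exact E1]. }
    destruct (IHY2 _ HI2) as [Z2 [HZ2 [Hsim2 Hterm2]]].
    exists Z2. split; [|split]; auto.
    + intros al S Hs. apply S_Seq2; auto.
    + cbn; auto.
  - inversion HI as [| | | | ? ? ? ? Y' HY HIY | |]; subst.
    assert (Hrec : Inst [] (TVar a) (TMu a k Y')) by (eapply I_rec; eauto).
    pose proof (inst_subst HIY Hrec) as HS. cbn in HS.
    destruct (Nat.eq_dec a a) as [_|]; [|congruence].
    destruct (IHY _ HS) as [Z0 [HZ0 [Hsim Hterm]]].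
    exists Z0. rewrite (unr_env_irrelevant Y _ []). split; [|split]; auto.
    + intros al S Hs. apply S_Mu. auto.
    + intros HZ. cbn. apply Hterm, term_subst in HZ. cbn in HZ. tauto.
Qed.

Lemma instL_in G br br' l t :
  InstL G br br' -> In (l, t) br -> exists t', In (l, t') br' /\ Inst G t t'.
Proof.
  induction 1; cbn; intros Hin; [tauto|].
  destruct Hin as [[= <- <-] | Hin]; [eauto|].
  destruct (IHInstL Hin) as [t1 [? ?]]; eauto.
Qed.

Lemma instL_refl G (br : list (L * stp)) :
  (forall l t, In (l, t) br -> Inst G t t) -> InstL G br br.
Proof.
  induction br as [|[l t] br IH]; intros Hbr; constructor.
  - apply (Hbr l); cbn; auto.
  - apply IH. intros l' t' Hin. apply (Hbr l'); cbn; auto.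
Qed.

Lemma kinded_inst_self D S k : has_kind D S k ->
  forall G, incl (musub S) M -> (forall a, In a (fv S) -> In a G \/ ~ In a bvs) ->
  Inst G S S.
Proof.
  induction 1 as [| | D pl br Hne _ _ IH | D S1 S2 _ IH1 _ IH2 | D a k Y _ _ IH | D a k _ |];
    intros G Hsub Hfv; cbn in Hsub, Hfv.
  - constructor.
  - constructor.
  - constructor; [exact Hne|]. apply instL_refl. intros l t Hin.
    apply (IH l t Hin).
    + intros x Hx. apply Hsub, in_flat_map. exists (l, t). auto.
    + intros a Ha. apply Hfv, in_flat_map. exists (l, t). auto.
  - constructor.
    + apply IH1; [intros x Hx | intros a Ha]; apply Hsub || apply Hfv; apply in_or_app; auto.
    + apply IH2; [intros x Hx | intros a Ha]; apply Hsub || apply Hfv; apply in_or_app; auto.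
  - constructor; [apply Hsub; cbn; auto|].
    apply IH; [intros x Hx; apply Hsub; cbn; auto|].
    intros b Hb. destruct (Nat.eq_dec a b) as [->|Hab]; [left; cbn; auto|].
    destruct (Hfv b) as [HbG | Hbfree]; cbn; auto.
    apply filter_In. split; [exact Hb|]. apply Nat.eqb_neq in Hab. now rewrite Hab.
  - constructor. apply Hfv. cbn; auto.
  - auto.
Qed.

(* Distinct bound variables make the BPA equations a function of X. *)
Section Simulation.
Hypothesis nodup_bvs : NoDup bvs.

Definition eqnsM : list (tvar * proc B L) :=
  map (fun '(a, Y) => (a, trm (unr [] Y))) M.

Definition reaches (S' : stp) (al : action B L) (p : proc B L) : Prop :=
  exists S'', p = trm S'' /\ tstep S' al S''.

Definition matched (q : proc B L) (al : action B L) (p : proc B L) : Prop :=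
  forall S S', trm S = q -> Inst [] S S' -> reaches S' al p.

(* A type whose translation is determined by its head constructor: not a
   choice, and not a sequence collapsed by the smart composition. *)
Definition rigid (S : stp) : Prop :=
  match S with
  | TChoice _ _ => False
  | TSeq S1 S2 => trm S1 <> PEps /\ trm S2 <> PEps
  | _ => True
  end.

Lemma choice_reaches pl br S' al p :
  Inst [] (TChoice pl br) S' -> pstep eqnsM (trm (TChoice pl br)) al p -> reaches S' al p.
Proof.
  intros HI Hs. cbn [tr] in Hs.
  apply psum_step in Hs as [q [Hq Hs]].
  apply in_map_iff in Hq as [[l t] [<- Hin]].
  apply odot_act_step in Hs as [-> ->].
  inversion HI as [| | ? ? ? br' _ HIL | | | |]; subst.
  destruct (instL_in _ _ HIL Hin) as [t' [Hin' HIt]].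
  exists t'. split; [exact (tr_inst HIt) | now apply S_Choice].
Qed.

(* To show that a move is matched it suffices to consider rigid types:
   collapsed sequences reduce to their nonempty component, choices are
   handled by choice_reaches. *)
Lemma reduce_to_rigid q al p : pstep eqnsM q al p ->
  (forall S S', trm S = q -> Inst [] S S' -> rigid S -> reaches S' al p) ->
  matched q al p.
Proof.
  intros Hstep Hrigid S. induction S; intros S' Htr HI;
    try (apply (Hrigid _ _ Htr HI); exact I).
  - subst q. eapply choice_reaches; eauto.
  - inversion HI as [| | | ? ? ? S1' S2' HI1 HI2 | | |]; subst S'.
    cbn [tr] in Htr.
    destruct (eps_or_not (trm S2)) as [Heps2|Heps2].
    + rewrite Heps2, odot_eps_r in Htr.
      destruct (IHS1 _ Htr HI1) as [S1'' [-> Hs]].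
      exists (TSeq S1'' S2'). split; [|now apply S_Seq1].
      cbn [tr]. now rewrite <- (tr_inst HI2), Heps2, odot_eps_r.
    + destruct (eps_or_not (trm S1)) as [Heps1|Heps1].
      * rewrite Heps1, odot_eps_l in Htr.
        destruct (IHS2 _ Htr HI2) as [S2'' [-> Hs]].
        exists S2''. split; [reflexivity|].
        apply S_Seq2; [exact (inst_eps_terminated HI1 Heps1) | exact Hs].
      * apply (Hrigid (TSeq S1 S2) _ Htr HI). cbn. auto.
Qed.

Lemma eqnsM_lookup X p0 Y : In (X, p0) eqnsM -> In (X, Y) M -> p0 = trm (unr [] Y).
Proof.
  unfold eqnsM. intros Hp HY.
  apply in_map_iff in Hp as [[a Y0] [[= <- <-] HY0]].
  now rewrite (NoDup_fst_functional _ _ _ _ nodup_bvs HY0 HY).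
Qed.

Lemma unfold_reaches X k Y Y' al p :
  In (X, Y) M -> Inst [X] Y Y' -> matched (trm (unr [] Y)) al p ->
  reaches (TMu X k Y') al p.
Proof.
  intros HY HI Hmatch.
  assert (Hrec : Inst [] (TVar X) (TMu X k Y')) by (eapply I_rec; eauto).
  pose proof (inst_subst HI Hrec) as HS. cbn in HS.
  destruct (Nat.eq_dec X X) as [_|]; [|congruence].
  destruct (unr_inst HS) as [Z0 [HZ0 [Hsim _]]].
  destruct (Hmatch _ _ eq_refl HZ0) as [S'' [Hp Hs]].
  exists S''. split; [exact Hp | apply S_Mu; auto].
Qed.

Lemma step_matched q al p : pstep eqnsM q al p -> matched q al p.
Proof.
  intros H. pose proof H as Hstep. revert Hstep.
  induction H as [al | | | p q al p' H IH Hne | p q al H IH | X p0 al p' HX H IH];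
    intros Hstep; apply (reduce_to_rigid Hstep);
    intros S S' Htr HI Hrigid; destruct S; cbn in Hrigid; try contradiction;
    cbn [tr] in Htr; try rewrite odot_proper in Htr by tauto;
    try match type of Htr with context [existsb ?f ?l] =>
          destruct (existsb f l) eqn:Hbound end;
    try discriminate.
  -
    injection Htr as <-. inversion HI; subst.
    exists TSkip. split; [reflexivity | constructor].
  -
    injection Htr as <-. inversion HI as [| | | | | ? ? ? Y ? HY | ? ? Hfree]; subst.
    + apply (in_map fst), existsb_eqb_In in HY. cbn in HY. congruence.
    + exists TSkip. split; [reflexivity | constructor].
  -
    injection Htr as Hp Hq.
    inversion HI as [| | | ? ? ? S1' S2' HI1 HI2 | | |]; subst.
    destruct (IH H _ _ eq_refl HI1) as [S1'' [Hp' Hs]].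
    exists (TSeq S1'' S2'). split; [|now apply S_Seq1].
    cbn [tr]. rewrite <- Hp', <- (tr_inst HI2).
    symmetry. apply odot_proper; [exact Hne | tauto].
  -
    injection Htr as Hp Hq.
    inversion HI as [| | | ? ? ? S1' S2' HI1 HI2 | | |]; subst.
    destruct (IH H _ _ eq_refl HI1) as [S1'' [Hp' Hs]].
    exists (TSeq S1'' S2'). split; [|now apply S_Seq1].
    cbn [tr]. now rewrite <- Hp', odot_eps_l, (tr_inst HI2).
  -
    injection Htr as ->. inversion HI as [| | | | ? ? ? ? Y' HY HIY | |]; subst.
    pose proof (eqnsM_lookup _ _ _ HX HY) as ->.
    exact (unfold_reaches k HY HIY (IH H)).
  - (* a recursion variable freed by an earlier unfolding *)
    injection Htr as ->. inversion HI as [| | | | | ? ? ? Y Y' HY _ HIY | ? ? Hfree]; subst.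
    + pose proof (eqnsM_lookup _ _ _ HX HY) as ->.
      exact (unfold_reaches k HY HIY (IH H)).
    + apply existsb_eqb_In in Hbound. destruct Hfree as [[] | Hfree]; contradiction.
Qed.
End Simulation.
End Instances.

(* T is an instance of itself, so every move of [[T]] is matched by T. *)
Theorem mainTheorem5 (B L : Type) (D : list (tvar * kind)) (m : mult)
  (T : stype B L) (al : action B L) (p : proc B L) :
  has_kind D T (KSession m) ->
  standing T ->
  pstep (eqns T) (tr (bv T) T) al p ->
  exists T' : stype B L, p = tr (bv T) T' /\ tstep T al T'.
Proof.
  intros Hkind [Hnodup [Hfree _]] Hstep.
  assert (Hself : Inst (musub T) [] T T).
  { eapply kinded_inst_self; [exact Hkind | apply incl_refl |].
    intros a Ha. right. intros Hb. exact (Hfree a Hb Ha). }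
  exact (step_matched Hnodup Hstep eq_refl Hself).
Qed.
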